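(* For every $n\ge1$ (of either parity), the permutation representation of $S_n$ over $\mathbb{C}$ arising from the action of $S_n$ (by $\pi\cdot S=\pi(S)$) on the set of odd-sized subsets of $\{1,\dots,n\}$ does not unite conjugacy classes.
   Context: A representation $T$ of $G$ unites conjugacy classes if there are non-conjugate $\sigma,\tau\in G$ with $T(\sigma),T(\tau)$ similar matrices. *)

From mathcomp Require Import all_boot all_order all_algebra all_fingroup all_field.
Set Implicit Arguments. Unset Strict Implicit. Unset Printing Implicit Defensive.
Import GRing.Theory Num.Theory.
Local Open Scope ring_scope.

Definition odd_subsets (n : nat) : {set {set 'I_n}} :=
  [set S : {set 'I_n} | odd #|S|].

(* Basis indexed by 'I_#|odd_subsets n| via
   enum_val; T(s) maps basis vector e_S to e_{s(S)}, i.e. the (i,j) entry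
   is 1 iff s(S_j) = S_i  (column convention). *)
Definition perm_rep_odd (n : nat) (s : 'S_n) :
  'M[algC]_(#|odd_subsets n|) :=
  \matrix_(i, j) ((s @: (enum_val j : {set 'I_n}) == enum_val i)%:R).

Definition similar_mx (k : nat) (A B : 'M[algC]_k) : Prop :=
  exists P : 'M[algC]_k, P \in unitmx /\ B = invmx P *m A *m P.

From mathcomp Require Import all_boot all_order all_algebra all_fingroup all_field.
From mathcomp Require Import cyclic zify.
Set Implicit Arguments. Unset Strict Implicit. Unset Printing Implicit Defensive.
Import GRing.Theory Num.Theory.

(* The trace of T(u) counts the odd u-invariant subsets, i.e. the unions of
   cycles of u of odd total size: there are 2^(c(u)-1) of them if u has a cycle
   of odd length and none otherwise, c(u) being the number of cycles.  Similar
   matrices have equal traces of all powers, so s^k and t^k have an odd cycle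
   for the same k, namely the multiples of the largest power K of 2 dividing
   every cycle length, and c(s^(K j)) = c(t^(K j)) for all j.  Writing the
   cycle lengths as K m_x, c(u^(K j)) = sum_x gcd(m_x, j) / m_x; as
   gcd(m, j) = sum_(d | m, d | j) phi(d), these sums for all j determine how
   many points lie on cycles of each length, and permutations of the same
   cycle type are conjugate. *)

Lemma dvdn_mul_gcd p j i : 0 < p -> (p %| j * i) = (p %/ gcdn p j %| i).
Proof.
move=> p_gt0; have g_gt0 : 0 < gcdn p j by rewrite gcdn_gt0 p_gt0.
have coprime_quo : coprime (p %/ gcdn p j) (j %/ gcdn p j).
  rewrite /coprime -(eqn_pmul2r g_gt0) muln_gcdl !divnK ?dvdn_gcdl ?dvdn_gcdr //.
  by rewrite mul1n.
have -> : j * i = j %/ gcdn p j * i * gcdn p j by rewrite mulnAC divnK ?dvdn_gcdr.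
by rewrite -{1}(divnK (dvdn_gcdl p j)) dvdn_pmul2r // Gauss_dvdr.
Qed.

Lemma gcdn_sum_totient N m j : 0 < m <= N ->
  gcdn m j = \sum_(d < N.+1 | (d %| m) && (d %| j)) totient d.
Proof.
case/andP => m_gt0 mN; have le_gN : gcdn m j <= N.
  by apply: leq_trans mN; apply: dvdn_leq m_gt0 (dvdn_gcdl m j).
rewrite -{1}(sum_totient_dvd (gcdn m j)).
rewrite (big_ord_widen_cond _ (fun d => d %| gcdn m j) _ (le_gN : gcdn m j < N.+1)).
apply: eq_bigl => d; rewrite dvdn_gcd.
case dvd_d : ((d %| m) && (d %| j)); rewrite ?andbF ?andbT //.
by rewrite ltnS dvdn_leq ?gcdn_gt0 ?m_gt0 // dvdn_gcd dvd_d.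
Qed.

Lemma card_odd_weight_subsets (X : finType) (P : {set X}) (w : X -> nat) :
  #|[set Q in powerset P | odd (\sum_(O in Q) w O)]| =
  if [exists O in P, odd (w O)] then 2 ^ #|P|.-1 else 0.
Proof.
case: existsP => [[O0 /andP [O0P oddO0]] | no_odd]; last first.
  apply/eqP; rewrite cards_eq0; apply/eqP/setP => Q; rewrite !inE.
  case QP: (Q \subset P) => //=; apply/negbTE.
  apply: (big_ind (fun m => ~~ odd m)) => // [a b|O OQ].
    by rewrite oddD => /negbTE -> /negbTE ->.
  by apply/negP => oddO; apply: no_odd; exists O; rewrite oddO andbT (subsetP QP).
pose tog (Q : {set X}) := if O0 \in Q then Q :\ O0 else O0 |: Q.
have togK : involutive tog.
  move=> Q; rewrite /tog; case Q0: (O0 \in Q); first by rewrite setD11 setD1K.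
  by rewrite setU11 setU1K ?Q0.
have odd_tog Q : odd (\sum_(O in tog Q) w O) = ~~ odd (\sum_(O in Q) w O).
  rewrite /tog; case: ifP => Q0.
    rewrite [in RHS](bigD1 O0) //= oddD oddO0 negbK.
    by apply/congr1/eq_bigl => O; rewrite !inE andbC.
  rewrite (bigD1 O0) ?setU11 //= oddD oddO0; congr (~~ odd _); apply: eq_bigl => O.
  by rewrite !inE; case: eqP => [->|]; rewrite ?Q0 ?andbT.
have tog_sub Q : (tog Q \subset P) = (Q \subset P).
  have O0P' : [set O0] :|: P = P by apply/setUidPr; rewrite sub1set.
  by rewrite /tog; case: ifP => _; rewrite ?subDset ?subUset ?sub1set ?O0P ?O0P'.
set E := [set Q in powerset P | odd _].
have card_E2 : #|E| * 2 = 2 ^ #|P|.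
  rewrite -card_powerset -(cardsID E (powerset P)) muln2 -addnn; congr (_ + _).
    by apply: eq_card => Q; rewrite !inE andbA andbb.
  rewrite -[LHS](card_preimset _ (can_inj togK)); apply: eq_card => Q.
  by rewrite !inE tog_sub odd_tog; case: (Q \subset P); rewrite /= ?andbT.
have P_gt0 : 0 < #|P| by rewrite card_gt0; apply/set0Pn; exists O0.
by apply/eqP; rewrite -(eqn_pmul2r (isT : 0 < 2)) card_E2 -expnSr prednK.
Qed.

Section Porbits.
Variable T : finType.
Implicit Types (s t u : {perm T}) (x y z : T).
Local Open Scope group_scope.

Lemma eq_expg_porbit u x i j :
  ((u ^+ i) x == (u ^+ j) x) = (i == j %[mod #|porbit u x|]).
Proof.
set p := #|porbit u x|.
have expg_p : (u ^+ p) x = x by rewrite permX iter_porbit.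
have expg_mod k : (u ^+ k) x = (u ^+ (k %% p)) x.
  rewrite {1}(divn_eq k p) expgD permM; congr ((u ^+ _) _).
  elim: (k %/ p) => [|q IHq]; first by rewrite mul0n expg0 perm1.
  by rewrite mulSn expgD permM expg_p.
have ltp k : k %% p < p by rewrite ltn_mod lt0n card_porbit_neq0.
rewrite (expg_mod i) (expg_mod j) !permX.
rewrite -(nth_traject u (ltp i)) -(nth_traject u (ltp j)).
by rewrite nth_uniq ?size_traject ?uniq_traject_porbit.
Qed.

Lemma expg_porbit_fix u x i : ((u ^+ i) x == x) = (#|porbit u x| %| i).
Proof. by rewrite -{2}[x]perm1 -(expg0 u) eq_expg_porbit mod0n. Qed.

Lemma card_porbit_expg u x j :
  #|porbit (u ^+ j) x| = #|porbit u x| %/ gcdn #|porbit u x| j.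
Proof.
have same_dvd i : (#|porbit (u ^+ j) x| %| i) = (#|porbit u x| %/ gcdn #|porbit u x| j %| i).
  by rewrite -expg_porbit_fix -expgM expg_porbit_fix dvdn_mul_gcd // lt0n card_porbit_neq0.
by apply/eqP; rewrite eqn_dvd same_dvd dvdnn -same_dvd dvdnn.
Qed.

Lemma mem_porbit_perm u x z : (u z \in porbit u x) = (z \in porbit u x).
Proof.
have -> : u z = (u ^+ 1) z by rewrite expg1.
by rewrite -!eq_porbit_mem porbit_perm.
Qed.

Lemma card_porbit_eq u x z : z \in porbit u x -> #|porbit u z| = #|porbit u x|.
Proof. by rewrite -eq_porbit_mem => /eqP ->. Qed.

Lemma porbit_sub u (A : {set T}) x :
  {homo u : z / z \in A} -> x \in A -> porbit u x \subset A.
Proof.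
move=> uA xA; apply/subsetP => _ /porbitP [i ->].
by elim: i => [|i IHi]; rewrite ?expg0 ?perm1 // expgSr permM uA.
Qed.

Definition porbit_index u x z := index z (traject u x #|porbit u x|).

Lemma porbit_indexK u x z : z \in porbit u x -> (u ^+ porbit_index u x z) x = z.
Proof.
rewrite porbit_traject => zx.
have lt_idx : porbit_index u x z < #|porbit u x|.
  by rewrite /porbit_index -{2}(size_traject u x #|porbit u x|) index_mem.
by rewrite permX -(nth_traject u lt_idx) nth_index.
Qed.

Lemma porbit_transport s t x y : #|porbit t y| = #|porbit s x| ->
  exists h : T -> T, [/\ {in porbit s x &, injective h},
    {in porbit s x, forall z, h z \in porbit t y} &
    {in porbit s x, forall z, h (s z) = t (h z)}].
Proof.
move=> eq_len; pose h z := (t ^+ porbit_index s x z) y.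
have hE i : h ((s ^+ i) x) = (t ^+ i) y.
  apply/eqP; rewrite eq_expg_porbit eq_len -eq_expg_porbit.
  by rewrite porbit_indexK ?mem_porbit.
exists h; split.
- move=> _ _ /porbitP [i ->] /porbitP [j ->]; rewrite !hE => /eqP.
  by rewrite eq_expg_porbit eq_len -eq_expg_porbit => /eqP.
- by move=> _ /porbitP [i ->]; rewrite hE mem_porbit.
- move=> _ /porbitP [i ->].
  by rewrite -[s _]permM -expgSr !hE expgSr permM.
Qed.

Lemma card_porbit_len_setD u (A : {set T}) x (m : nat) :
  {homo u : z / z \in A} -> x \in A ->
  #|[set z in A | #|porbit u z| == m]| =
  #|[set z in A :\: porbit u x | #|porbit u z| == m]|
    + (m == #|porbit u x|) * #|porbit u x|.
Proof.
move=> uA xA; rewrite -(cardsID (porbit u x)) addnC; congr (_ + _).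
  by apply: eq_card => z; rewrite !inE andbA.
case: eqP => [->|ne]; rewrite ?mul1n ?mul0n.
  apply: eq_card => z; rewrite !inE.
  case zx: (z \in porbit u x); rewrite ?andbF // andbT.
  by rewrite (subsetP (porbit_sub uA xA)) //= (card_porbit_eq zx) eqxx.
apply/eqP; rewrite cards_eq0; apply/eqP/setP => z; rewrite !inE.
case zx: (z \in porbit u x); rewrite ?andbF // andbT.
by rewrite (card_porbit_eq zx) eq_sym (introF eqP ne) andbF.
Qed.

(* Match the cycle of some x in A with a cycle of t of the same length, then
   recurse on the complements of both cycles. *)
Lemma exists_intertwining_inj s t (A B : {set T}) :
  {homo s : x / x \in A} -> {homo t : y / y \in B} ->
  (forall l : nat, #|[set x in A | #|porbit s x| == l]|
           = #|[set y in B | #|porbit t y| == l]|) ->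
  exists g : T -> T, [/\ {in A &, injective g}, {in A, forall x, g x \in B}
                       & {in A, forall x, g (s x) = t (g x)}].
Proof.
elim: {A}#|A|.+1 {-2}A B (ltnSn #|A|) => // n IHn A B leAn sA tB eq_cnt.
have [->|[x xA]] := set_0Vmem A; first by exists id; split=> // z; rewrite inE.
have [y yB eq_len] : exists2 y, y \in B & #|porbit t y| = #|porbit s x|.
  have : 0 < #|[set y in B | #|porbit t y| == #|porbit s x|]|.
    by rewrite -eq_cnt card_gt0; apply/set0Pn; exists x; rewrite inE xA eqxx.
  by rewrite card_gt0 => /set0Pn [y]; rewrite inE => /andP [yB /eqP]; exists y.
have [h [h_inj hB h_comm]] := porbit_transport eq_len.
have ltA'n : #|A :\: porbit s x| < n.
  rewrite ltnS in leAn; apply: leq_trans leAn; apply: proper_card; apply/properP.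
  by split; [exact: subsetDl | exists x; rewrite ?inE ?porbit_id].
have sA' : {homo s : z / z \in A :\: porbit s x}.
  by move=> z; rewrite !inE mem_porbit_perm => /andP [-> /sA ->].
have tB' : {homo t : z / z \in B :\: porbit t y}.
  by move=> z; rewrite !inE mem_porbit_perm => /andP [-> /tB ->].
have eq_cnt' l : #|[set z in A :\: porbit s x | #|porbit s z| == l]|
               = #|[set z in B :\: porbit t y | #|porbit t z| == l]|.
  apply/eqP; rewrite -(eqn_add2r ((l == #|porbit s x|) * #|porbit s x|)).
  rewrite -(card_porbit_len_setD l sA xA) -eq_len.
  by rewrite -(card_porbit_len_setD l tB yB) eq_cnt.
have [g [g_inj gB g_comm]] := IHn _ _ ltA'n sA' tB' eq_cnt'.
have gB' z : z \in A -> z \notin porbit s x -> g z \notin porbit t y.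
  by move=> zA zx; have := gB z; rewrite !inE zA zx => /(_ isT) /andP [].
exists (fun z => if z \in porbit s x then h z else g z); split.
- move=> z1 z2 z1A z2A /=.
  case z1x: (z1 \in porbit s x); case z2x: (z2 \in porbit s x).
  + exact: h_inj.
  + by move=> eq_hg; have := gB' z2 z2A; rewrite z2x -eq_hg hB // => /(_ isT).
  + by move=> eq_gh; have := gB' z1 z1A; rewrite z1x eq_gh hB // => /(_ isT).
  + by apply: g_inj; rewrite inE ?z1x ?z2x.
- move=> z zA /=; case: ifP => zx.
    by apply: (subsetP (porbit_sub tB yB)); apply: hB.
  by have := gB z; rewrite !inE zx zA => /(_ isT) /andP [].
- move=> z zA /=; rewrite mem_porbit_perm; case: ifP => zx; first exact: h_comm.
  by apply: g_comm; rewrite inE zx.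
Qed.

Lemma conj_perm_of_porbit_counts s t :
  (forall l : nat, #|[set x | #|porbit s x| == l]| = #|[set y | #|porbit t y| == l]|) ->
  exists g : {perm T}, t = s ^ g.
Proof.
move=> eq_cnt.
have eq_cntT l : #|[set x in [set: T] | #|porbit s x| == l]|
               = #|[set y in [set: T] | #|porbit t y| == l]|.
  by rewrite (eq_card (B := [set x | #|porbit s x| == l])) ?eq_cnt;
    [apply: eq_card | ] => z; rewrite !inE.
have [g [g_inj _ g_comm]] := @exists_intertwining_inj s t setT setT
  (fun _ _ => in_setT _) (fun _ _ => in_setT _) eq_cntT.
have g_injT : injective g by move=> a b; apply: g_inj; rewrite in_setT.
exists (perm g_injT); apply/permP => y.
rewrite conjgE !permM -{1}[y](permKV (perm g_injT)).
by rewrite !permE g_comm ?in_setT.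
Qed.

Lemma porbits_partition u : partition (porbits u) [set: T].
Proof.
have -> : porbits u = preim_partition (porbit u) [set: T].
  apply/setP => O; apply/imsetP/imsetP => -[x _ ->]; exists x => //;
    by apply/setP => y; rewrite !inE eq_porbit_mem porbit_sym.
exact: preim_partitionP.
Qed.

Lemma cover_blocksK (P Q : {set {set T}}) :
  trivIset P -> set0 \notin P -> Q \subset P ->
  [set O in P | O \subset cover Q] = Q.
Proof.
move=> trivP P_neq0 QP; apply/setP => O; rewrite inE.
apply/andP/idP => [[OP OQ]|OQ]; last by rewrite (subsetP QP) // bigcup_sup.
have [x xO] : exists x, x \in O.
  by apply/set0Pn; apply: contraNneq P_neq0 => <-.
have /bigcupP [O' O'Q xO'] := subsetP OQ x xO.
by rewrite -(def_pblock trivP OP xO) (def_pblock trivP (subsetP QP _ O'Q) xO').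
Qed.

Lemma fixed_set_cover u (S : {set T}) :
  u @: S \subset S -> S = cover [set O in porbits u | O \subset S].
Proof.
move=> uS; have uS' : {homo u : z / z \in S}.
  by move=> z zS; apply: (subsetP uS); apply: imset_f.
apply/setP => z; apply/idP/bigcupP => [zS|[O]]; last first.
  by rewrite inE => /andP [_ /subsetP]; apply.
by exists (porbit u z); rewrite ?porbit_id // inE imset_f //= porbit_sub.
Qed.

Lemma cover_porbits_fixed u (Q : {set {set T}}) :
  Q \subset porbits u -> u @: cover Q \subset cover Q.
Proof.
move=> Qu; apply/subsetP => _ /imsetP [z /bigcupP [O OQ zO] ->].
apply/bigcupP; exists O => //.
by have /imsetP [x _ Ox] := subsetP Qu O OQ; rewrite Ox mem_porbit_perm -Ox.
Qed.

Definition odd_fixed_sets u := [set S : {set T} | odd #|S| & u @: S == S].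

Lemma card_odd_fixed_sets u :
  #|odd_fixed_sets u| =
  if [exists x, odd #|porbit u x|] then (2 ^ #|porbits u|.-1)%N else 0%N.
Proof.
have /and3P [_ triv_u u_neq0] := porbits_partition u.
have card_cover (Q : {set {set T}}) : Q \subset porbits u -> #|cover Q| = \sum_(O in Q) #|O|.
  by move=> Qu; apply/eqP; rewrite (leq_card_cover Q).2 (trivIsetS Qu).
have fixedE (S : {set T}) : (u @: S == S) = (u @: S \subset S).
  by rewrite eqEcard card_imset ?leqnn ?andbT //; apply: perm_inj.
set E := [set Q in powerset (porbits u) | odd (\sum_(O in Q) #|O|)].
have -> : [exists x, odd #|porbit u x|] = [exists O in porbits u, odd #|O|].
  apply/existsP/existsP => [[x oddx]|[_ /andP [/imsetP [x _ ->] oddx]]].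
    by exists (porbit u x); rewrite imset_f.
  by exists x.
rewrite -card_odd_weight_subsets -/E.
have -> : odd_fixed_sets u = cover @: E.
  apply/setP => S; rewrite inE fixedE; apply/andP/imsetP => [[oddS uS]|[Q]].
    have sub : [set O in porbits u | O \subset S] \subset porbits u.
      by apply/subsetP => O; rewrite inE => /andP [].
    exists [set O in porbits u | O \subset S]; last exact: fixed_set_cover.
    by rewrite !inE sub -card_cover // -fixed_set_cover.
  rewrite !inE => /andP [Qu oddQ] ->.
  by rewrite card_cover // oddQ cover_porbits_fixed.
apply: card_in_imset => Q1 Q2; rewrite !inE => /andP [Q1u _] /andP [Q2u _] eqQ.
by rewrite -(cover_blocksK triv_u u_neq0 Q1u) eqQ cover_blocksK.
Qed.

Lemma exists_odd_porbit_expg_dvd u (x0 : T) :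
  exists2 K, (forall x, K %| #|porbit u x|)
           & forall k, [exists x, odd #|porbit (u ^+ k) x|] = (K %| k).
Proof.
have len_gt0 x : 0 < #|porbit u x| by rewrite lt0n card_porbit_neq0.
have ex_log : exists e, [exists x, logn 2 #|porbit u x| == e].
  by exists (logn 2 #|porbit u x0|); apply/existsP; exists x0.
case: (ex_minnP ex_log) => E /existsP [xm /eqP log_xm] E_min.
have E_le x : E <= logn 2 #|porbit u x| by apply: E_min; apply/existsP; exists x.
have K_dvd x : 2 ^ E %| #|porbit u x| by rewrite pfactor_dvdn.
(* K is 2 ^ E, where E is the least 2-adic valuation of a cycle length. *)
exists (2 ^ E)%N => // k; apply/existsP/idP => [[x]|Kk].
  rewrite card_porbit_expg => odd_quo.
  have coprime_K : coprime (2 ^ E) (#|porbit u x| %/ gcdn #|porbit u x| k).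
    by apply: coprimeXl; rewrite coprime2n.
  have : 2 ^ E %| gcdn #|porbit u x| k.
    by rewrite -(Gauss_dvdr _ coprime_K) divnK ?dvdn_gcdl.
  by move/dvdn_trans; apply; apply: dvdn_gcdr.
exists xm; rewrite card_porbit_expg; apply: contraT; rewrite -dvdn2 => even_quo.
have : 2 ^ E.+1 %| #|porbit u xm|.
  rewrite -(divnK (dvdn_gcdl #|porbit u xm| k)) expnSr mulnC dvdn_mul //.
  by rewrite dvdn_gcd K_dvd.
by rewrite pfactor_dvdn // log_xm ltnn.
Qed.

End Porbits.

Local Open Scope ring_scope.

Lemma card_porbitsE (R : numFieldType) (T : finType) (u : {perm T}) :
  #|porbits u|%:R = \sum_x (#|porbit u x|%:R)^-1 :> R.
Proof.
have /and3P [/eqP cover_u triv_u _] := porbits_partition u.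
transitivity (\sum_(x in cover (porbits u)) (#|porbit u x|%:R)^-1 : R); last first.
  by apply: eq_bigl => x; rewrite cover_u inE.
rewrite big_trivIset // -sum1_card natr_sum; apply: eq_bigr => _ /imsetP [x _ ->].
rewrite (eq_bigr (fun _ => (#|porbit u x|%:R)^-1)) => [|z zx]; last first.
  by rewrite (card_porbit_eq zx).
by rewrite sumr_const -[RHS]mulr_natr mulVf // pnatr_eq0 card_porbit_neq0.
Qed.

Lemma sum_fibers (R : nmodType) (T : finType) (p : T -> nat) N (f : nat -> R) :
  (forall x, p x <= N)%N ->
  \sum_x f (p x) = \sum_(m < N.+1) f m *+ #|[set x | p x == m]|.
Proof.
move=> pN; rewrite (partition_big (fun x => inord (p x) : 'I_N.+1) predT) //=.
apply: eq_bigr => m _.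
have p_ord x : (inord (p x) == m :> 'I_N.+1) = (p x == m).
  by rewrite -val_eqE /= inordK // ltnS.
rewrite (eq_bigr (fun _ => f m)) => [|x /eqP <-]; last by rewrite inordK // ltnS.
by rewrite sumr_const; congr (_ *+ _); apply: eq_card => x; rewrite !inE -p_ord.
Qed.

Lemma divisor_sums_eq0 (R : idomainType) N (w c : nat -> R) :
  (forall d, (0 < d <= N)%N -> w d != 0) ->
  (forall j, (0 < j <= N)%N -> \sum_(d < N.+1 | (d %| j)%N) w d * c d = 0) ->
  forall j, (0 < j <= N)%N -> c j = 0.
Proof.
move=> w_neq0 sum0; elim/ltn_ind => j IHj /andP [j_gt0 jN].
have := sum0 j; rewrite j_gt0 jN => /(_ isT).
rewrite (bigD1 (inord j)) /= ?inordK ?dvdnn ?ltnS // big1 ?addr0.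
  by move/eqP; rewrite mulf_eq0 (negbTE (w_neq0 j _)) ?j_gt0 // => /eqP.
move=> d /andP [dj d_neq]; have d_neq' : val d != j.
  by apply: contraNneq d_neq => <-; apply/eqP/val_inj; rewrite /= inordK // ltnS.
have d_gt0 : (0 < d)%N.
  by rewrite lt0n; apply: contraTneq dj => ->; rewrite dvd0n -lt0n j_gt0.
have ltdj : (d < j)%N by rewrite ltn_neqAle d_neq' dvdn_leq.
by rewrite IHj ?mulr0 // d_gt0 (leq_trans (ltnW ltdj)).
Qed.

Lemma multiple_sums_eq0 (R : zmodType) N (c : nat -> R) : c 0 = 0 ->
  (forall l, (0 < l <= N)%N -> \sum_(m < N.+1 | (l %| m)%N) c m = 0) ->
  forall l, (0 < l <= N)%N -> c l = 0.
Proof.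
move=> c0 sum0.
suff c_eq0 k l : (N - l < k)%N -> (0 < l <= N)%N -> c l = 0 by move=> l; apply: c_eq0.
elim: k l => // k IHk l lt_k /andP [l_gt0 lN].
have := sum0 l; rewrite l_gt0 lN => /(_ isT).
rewrite (bigD1 (inord l)) /= ?inordK ?dvdnn ?ltnS // big1 ?addr0 // => m /andP [lm m_neq].
have [m0|m_gt0] := posnP m; first by rewrite m0.
have m_neq' : val m != l.
  by apply: contraNneq m_neq => <-; apply/eqP/val_inj; rewrite /= inordK // ltnS.
have ltlm : (l < m)%N by rewrite ltn_neqAle eq_sym m_neq' dvdn_leq.
have mN : (m <= N)%N by rewrite -ltnS.
by apply: IHk; [lia | rewrite m_gt0].
Qed.

(* gcd m j = sum_(d | m, d | j) phi d makes the system triangular in the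
   divisor sums of c. *)
Lemma gcd_sums_eq0 (R : numFieldType) N (c : nat -> R) : c 0%N = 0 ->
  (forall j, (0 < j <= N)%N -> \sum_(m < N.+1) c m * (gcdn m j)%:R = 0) ->
  forall l, (0 < l <= N)%N -> c l = 0.
Proof.
move=> c0 gcd_sum0.
have div_sum0 j : (0 < j <= N)%N -> \sum_(d < N.+1 | (d %| j)%N)
    (totient d)%:R * \sum_(m < N.+1 | (d %| m)%N) c m = 0.
  move=> j_bd; rewrite -[RHS](gcd_sum0 j j_bd).
  under eq_bigr do rewrite mulr_sumr.
  rewrite (exchange_big_dep predT) //=; apply: eq_bigr => m _; rewrite -mulr_suml.
  have [m0|m_gt0] := posnP m; first by rewrite m0 c0 mulr0 mul0r.
  have m_bd : (0 < m <= N)%N by rewrite m_gt0 -ltnS ltn_ord.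
  rewrite (gcdn_sum_totient j m_bd) natr_sum mulrC.
  by congr (_ * _); apply: eq_bigl => d; rewrite andbC.
have totient_neq0 d : (0 < d <= N)%N -> (totient d)%:R != 0 :> R.
  by case/andP => d_gt0 _; rewrite pnatr_eq0 -lt0n totient_gt0.
apply: multiple_sums_eq0 c0 _.
exact: (divisor_sums_eq0 (c := fun d => \sum_(m < N.+1 | (d %| m)%N) c m)
  totient_neq0 div_sum0).
Qed.

Lemma counts_eq_of_gcd_sums (R : numFieldType) (T : finType) (p q : T -> nat) N :
  (forall x, 0 < p x <= N)%N -> (forall x, 0 < q x <= N)%N ->
  (forall j, (0 < j)%N -> \sum_x (gcdn (p x) j)%:R / (p x)%:R
                        = \sum_x (gcdn (q x) j)%:R / (q x)%:R :> R) ->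
  forall m, #|[set x | p x == m]| = #|[set x | q x == m]|.
Proof.
move=> p_bd q_bd eq_sums.
pose a m : R := #|[set x | p x == m]|%:R - #|[set x | q x == m]|%:R.
(* Since 0^-1 = 0, the index m = 0 contributes nothing. *)
have c0 : a 0%N / (0%N)%:R = 0 by rewrite invr0 mulr0.
have gcd_sum0 j : (0 < j <= N)%N -> \sum_(m < N.+1) a m / m%:R * (gcdn m j)%:R = 0.
  case/andP => j_gt0 _; have := eq_sums j j_gt0.
  have pN x : (p x <= N)%N by case/andP: (p_bd x).
  have qN x : (q x <= N)%N by case/andP: (q_bd x).
  rewrite (sum_fibers (fun m => (gcdn m j)%:R / m%:R) pN).
  rewrite (sum_fibers (fun m => (gcdn m j)%:R / m%:R) qN).
  move/eqP; rewrite -subr_eq0 -sumrB => /eqP sum0.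
  rewrite -[RHS]sum0; apply: eq_bigr => m _.
  by rewrite /a mulrAC -mulrA mulrBl !mulr_natl.
have a_eq0 l : (0 < l <= N)%N -> a l = 0.
  move=> l_bd; have /eqP := gcd_sums_eq0 (c := fun m => a m / m%:R) c0 gcd_sum0 l_bd.
  case/andP: l_bd => l_gt0 _.
  by rewrite mulf_eq0 invr_eq0 pnatr_eq0 (gtn_eqF l_gt0) orbF => /eqP.
move=> m; have [m_bd|m_out] := boolP (0 < m <= N)%N.
  by apply/eqP; rewrite -(eqr_nat R) -subr_eq0; apply/eqP; exact: a_eq0.
have card0 (r : T -> nat) : (forall x, 0 < r x <= N)%N -> #|[set x | r x == m]| = 0%N.
  move=> r_bd; apply/eqP; rewrite cards_eq0; apply/eqP/setP => x; rewrite !inE.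
  by apply: contraNF m_out => /eqP <-.
by rewrite !card0.
Qed.

Lemma card_porbits_expgM (T : finType) (u : {perm T}) K j :
  (forall x, K %| #|porbit u x|)%N ->
  #|porbits (u ^+ (K * j))%g|%:R
    = \sum_x (gcdn (#|porbit u x| %/ K) j)%:R / (#|porbit u x| %/ K)%:R :> rat.
Proof.
move=> K_dvd; rewrite card_porbitsE; apply: eq_bigr => x _.
rewrite card_porbit_expg -{1 2}(divnK (K_dvd x)) [(_ * K)%N]mulnC -muln_gcdr.
rewrite divnMl ?(dvdn_gt0 _ (K_dvd x)) ?lt0n ?card_porbit_neq0 //.
by rewrite natf_div ?dvdn_gcdl // invf_div.
Qed.

Lemma odd_fixed_sets_porbits_expgM (T : finType) (x0 : T) (s t : {perm T}) :
  (forall k, #|odd_fixed_sets (s ^+ k)%g| = #|odd_fixed_sets (t ^+ k)%g|) ->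
  exists K, [/\ (0 < K)%N, (forall x, K %| #|porbit s x|)%N,
                (forall x, K %| #|porbit t x|)%N &
                forall j, #|porbits (s ^+ (K * j))%g| = #|porbits (t ^+ (K * j))%g|].
Proof.
move=> eq_fixed.
have odd_eq k :
    [exists x, odd #|porbit (s ^+ k)%g x|] = [exists x, odd #|porbit (t ^+ k)%g x|].
  have := eq_fixed k; rewrite !card_odd_fixed_sets.
  by do 2 case: ifP => // _; move/eqP; rewrite ?expn_eq0 // eq_sym expn_eq0.
have [K K_dvd oddE] := exists_odd_porbit_expg_dvd s x0.
have [K' K'_dvd oddE'] := exists_odd_porbit_expg_dvd t x0.
have eqK : K' = K.
  have dvdE k : (K %| k)%N = (K' %| k)%N by rewrite -oddE -oddE' odd_eq.
  by apply/eqP; rewrite eqn_dvd dvdE dvdnn -dvdE dvdnn.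
have porbits_gt0 (u : {perm T}) : (0 < #|porbits u|)%N.
  by rewrite card_gt0; apply/set0Pn; exists (porbit u x0); apply: imset_f.
rewrite {}eqK in K'_dvd; exists K; split => //.
  by apply: dvdn_gt0 (K_dvd x0); rewrite lt0n card_porbit_neq0.
move=> j; have := eq_fixed (K * j)%N; rewrite !card_odd_fixed_sets -odd_eq oddE dvdn_mulr //.
move/(expnI (ltnSn 1)) => eq_pred.
by rewrite -[LHS]prednK ?porbits_gt0 // eq_pred prednK ?porbits_gt0.
Qed.

Lemma porbit_counts_of_porbits_expgM (T : finType) (s t : {perm T}) K :
  (0 < K)%N -> (forall x, K %| #|porbit s x|)%N -> (forall x, K %| #|porbit t x|)%N ->
  (forall j, #|porbits (s ^+ (K * j))%g| = #|porbits (t ^+ (K * j))%g|) ->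
  forall l : nat, #|[set x | #|porbit s x| == l]| = #|[set x | #|porbit t x| == l]|.
Proof.
move=> K_gt0 Ks Kt eq_porbits.
pose p (u : {perm T}) x := (#|porbit u x| %/ K)%N.
have p_bd u : (forall x, K %| #|porbit u x|)%N -> forall x, (0 < p u x <= #|T|)%N.
  move=> Ku x; rewrite divn_gt0 // dvdn_leq ?lt0n ?card_porbit_neq0 //=.
  by rewrite (leq_trans (leq_div _ _)) ?max_card.
have eq_counts (m : nat) : #|[set x | p s x == m]| = #|[set x | p t x == m]|.
  apply: (counts_eq_of_gcd_sums (R := rat) (p_bd s Ks) (p_bd t Kt)) => j _.
  by rewrite -!card_porbits_expgM // eq_porbits.
move=> l; have [Kl|not_Kl] := boolP (K %| l)%N.
  have cnt_p (u : {perm T}) : (forall x, K %| #|porbit u x|)%N ->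
      #|[set x | #|porbit u x| == l]| = #|[set x | p u x == (l %/ K)%N]|.
    move=> Ku; apply: eq_card => x; rewrite !inE.
    by rewrite -{1}(divnK (Ku x)) -{1}(divnK Kl) eqn_pmul2r.
  by rewrite (cnt_p s Ks) (cnt_p t Kt).
have cnt0 (u : {perm T}) :
    (forall x, K %| #|porbit u x|)%N -> #|[set x | #|porbit u x| == l]| = 0%N.
  move=> Ku; apply/eqP; rewrite cards_eq0; apply/eqP/setP => x; rewrite !inE.
  by apply: contraNF not_Kl => /eqP <-.
by rewrite (cnt0 s Ks) (cnt0 t Kt).
Qed.

Section PermRepOdd.
Variable n : nat.
Implicit Types u v : 'S_n.

Lemma perm_rep_oddM u v :
  perm_rep_odd u *m perm_rep_odd v = perm_rep_odd (v * u)%g.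
Proof.
apply/matrixP => i j; rewrite !mxE.
have -> : \sum_k perm_rep_odd u i k * perm_rep_odd v k j =
    \sum_(S in odd_subsets n) (u @: S == enum_val i)%:R * (v @: enum_val j == S)%:R.
  by rewrite [RHS]big_enum_val; apply: eq_bigr => k _; rewrite !mxE.
have vj_odd : v @: enum_val j \in odd_subsets n.
  by have := enum_valP j; rewrite !inE card_imset //; apply: perm_inj.
rewrite (bigD1 _ vj_odd) /= eqxx mulr1 big1 ?addr0 => [|S /andP [_ S_neq]].
  by rewrite -imset_comp; congr ((_ == _)%:R); apply: eq_imset => x; rewrite permM.
by rewrite [_ == S]eq_sym (negbTE S_neq) mulr0.
Qed.

Lemma perm_rep_odd1 : perm_rep_odd (1%g : 'S_n) = 1%:M.
Proof.
apply/matrixP => i j; rewrite !mxE.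
have -> : (1%g : 'S_n) @: enum_val j = enum_val j.
  by rewrite -[RHS]imset_id; apply: eq_imset => x; rewrite perm1.
by rewrite (inj_eq enum_val_inj) eq_sym.
Qed.

Lemma perm_rep_oddX u k : perm_rep_odd u ^+ k = perm_rep_odd (u ^+ k)%g.
Proof.
elim: k => [|k IHk]; first by rewrite expr0 expg0 perm_rep_odd1.
by rewrite exprS IHk [in LHS]/GRing.mul /= perm_rep_oddM expgSr.
Qed.

Lemma mxtrace_perm_rep_odd u : \tr (perm_rep_odd u) = #|odd_fixed_sets u|%:R.
Proof.
rewrite /mxtrace (eq_bigr (fun i : 'I_#|odd_subsets n| =>
  (u @: (enum_val i : {set 'I_n}) == enum_val i)%:R)) => [|i _]; last by rewrite mxE.
rewrite -(big_enum_val (A := mem (odd_subsets n)) (fun S => (u @: S == S)%:R)).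
rewrite -sum1_card natr_sum [RHS]big_mkcond [LHS]big_mkcond /=.
by apply: eq_bigr => S _; rewrite !inE; case: (_ == _); case: (odd _).
Qed.

End PermRepOdd.

Lemma similar_mx_trace_expr m (A B : 'M[algC]_m) k :
  similar_mx A B -> \tr (B ^+ k) = \tr (A ^+ k).
Proof.
case=> P [P_unit ->].
have conjX : (invmx P *m A *m P) ^+ k = invmx P *m (A ^+ k) *m P.
  elim: k => [|k IHk]; first by rewrite !expr0 mulmx1 mulVmx.
  rewrite exprS IHk [in LHS]/GRing.mul /= !mulmxA -[invmx P *m A *m P *m invmx P]mulmxA.
  by rewrite mulmxV // mulmx1 exprS [in RHS]/GRing.mul /= !mulmxA.
by rewrite conjX mxtrace_mulC mulmxA mulmxV // mul1mx.
Qed.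

Theorem theorem3p10 (n : nat) (hn : (0 < n)%N) (s t : 'S_n) :
  similar_mx (perm_rep_odd s) (perm_rep_odd t) ->
  exists g : 'S_n, t = (s ^ g)%g.
Proof.
move=> sim_st.
have eq_fixed k : #|odd_fixed_sets (s ^+ k)%g| = #|odd_fixed_sets (t ^+ k)%g|.
  apply/eqP; rewrite -(eqr_nat algC) -!mxtrace_perm_rep_odd -!perm_rep_oddX.
  by rewrite (similar_mx_trace_expr k sim_st).
have [K [K_gt0 Ks Kt eq_porbits]] := odd_fixed_sets_porbits_expgM (Ordinal hn) eq_fixed.
apply: conj_perm_of_porbit_counts.
exact: porbit_counts_of_porbits_expgM K_gt0 Ks Kt eq_porbits.
Qed.
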